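(* Let $\log_{Ab}(x)=x+\sum_{i\ge1}m_ix^{i+1}$, $m_i\in\mathbb{Q}[a_1,a_2]$, be the logarithm of the universal Abel formal group law. Then for every $n\ge2$, $$m_{n-1}=\frac1n\prod_{j=1}^{n-1}\left(\frac{n-2j}{\sqrt{j(n-j)}}\sqrt{2a_2}-a_1\right),$$ where the right-hand side (in which the factors for $j$ and $n-j$ combine to $a_1^2-\frac{2(n-2j)^2}{j(n-j)}a_2$, and the factor for $j=n/2$ equals $-a_1$) is a polynomial in $a_1,a_2$.
   Context: The universal Abel formal group law is the formal group law over $\mathbb{Q}[a_1,a_2]$ ($a_1,a_2$ free parameters) of the form $\mathcal{F}_{Ab}(x,y)=xR(y)+yR(x)$ with $R(x)=1+\frac{a_1}{2}x+a_2x^2+a_3x^3+\cdots$, where the coefficients $a_n\in\mathbb{Q}[a_1,a_2]$, $n\ge3$, are uniquely determined by associativity (e.g. $a_3=-\frac23a_1a_2$, $a_4=\frac12a_1^2a_2-\frac12a_2^2$). Its logarithm is $\log_{Ab}(x)=\int_0^x\frac{dt}{1+a_1t+a_2t^2+a_3t^3+\cdots}$; e.g. $m_1=-\frac12a_1$, $m_2=\frac13(a_1^2-a_2)$. *)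

(* Q[a1,a2] is modelled as {poly {poly rat}}:
   a1 = inner variable (constant of the outer ring), a2 = outer variable. *)
From HB Require Import structures.
From mathcomp Require Import all_boot all_order all_algebra.
Set Implicit Arguments. Unset Strict Implicit. Unset Printing Implicit Defensive.
Import Order.TTheory GRing.Theory Num.Theory.
Local Open Scope ring_scope.

Notation QA := {poly {poly rat}}.
Definition a1 : QA := ('X : {poly rat})%:P.
Definition a2 : QA := 'X.
Definition cst (q : rat) : QA := (q%:P)%:P.

(* Formal power series in two variables, by coefficients: f i j = coeff of x^i y^j. *)
Definition one2 (i j : nat) : QA := ((i == 0%N) && (j == 0%N))%:R.
Definition mul2 (f g : nat -> nat -> QA) (i j : nat) : QA :=
  \sum_(p < i.+1) \sum_(q < j.+1) f p q * g (i - p)%N (j - q)%N.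
Fixpoint pow2 (f : nat -> nat -> QA) (n : nat) : nat -> nat -> QA :=
  match n with 0%N => one2 | n'.+1 => mul2 f (pow2 f n') end.

(* r n = coefficient of x^n in R(x) = 1 + a1/2 x + a2 x^2 + a3 x^3 + ...
   abelF r = the series F(x,y) = x R(y) + y R(x). *)
Definition abelF (r : nat -> QA) (i j : nat) : QA :=
  (i == 1%N)%:R * r j + (j == 1%N)%:R * r i.

(* Coefficient of x^i y^j in R(G(x,y)) for a series G with G(0,0) = 0
   (then G^n only has monomials of total degree >= n, so the sum is finite). *)
Definition compR (r : nat -> QA) (G : nat -> nat -> QA) (i j : nat) : QA :=
  \sum_(n < (i + j).+1) r n * pow2 G n i j.

(* Associativity F(F(x,y),z) = F(x,F(y,z)), compared coefficientwise on x^i y^j z^k: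
   F(F(x,y),z) = F(x,y) R(z) + z R(F(x,y)),  F(x,F(y,z)) = x R(F(y,z)) + F(y,z) R(x). *)
Definition abel_assoc (r : nat -> QA) : Prop :=
  forall i j k : nat,
    abelF r i j * r k + (k == 1%N)%:R * compR r (abelF r) i j
    = (i == 1%N)%:R * compR r (abelF r) j k + r i * abelF r j k.

Definition is_universal_abel (r : nat -> QA) : Prop :=
  [/\ r 0%N = 1, r 1%N = cst (1/2) * a1, r 2%N = a2 & abel_assoc r].

Definition abel_den (r : nat -> QA) (n : nat) : QA :=
  match n with 0%N => 1 | 1%N => a1 | _ => r n end.

(* m is the logarithm: log(x) = x + sum_{i>=1} m i x^(i+1) (m 0 = 1), characterised by
   log(0) = 0 and log'(x) * (1 + a1 x + a2 x^2 + ...) = 1, coefficientwise. *)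
Definition is_abel_log (r m : nat -> QA) : Prop :=
  m 0%N = 1 /\
  forall n : nat, (0 < n)%N ->
    \sum_(k < n.+1) abel_den r k * ((n - k).+1)%:R * m (n - k)%N = 0.

(* Right-hand side, with the factors j and n-j combined:
   (1/n) * (-a1 if n even) * prod_{1<=j, 2j<n} (a1^2 - 2(n-2j)^2/(j(n-j)) a2). *)
Definition abel_rhs (n : nat) : QA :=
  cst (n%:R)^-1 * (if odd n then 1 else - a1) *
  \prod_(1 <= j < n | (2 * j < n)%N)
     (a1 ^+ 2 - cst ((2 * (n - 2 * j) ^ 2)%:R / (j * (n - j))%:R) * a2).

From HB Require Import structures.
From mathcomp Require Import all_boot all_order all_algebra.
From mathcomp Require Import ring zify.
Import Order.TTheory GRing.Theory Num.Theory.
Set Implicit Arguments. Unset Strict Implicit. Unset Printing Implicit Defensive.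
Local Open Scope ring_scope.

(* Apply the substitution theta : a2 |-> a2 (a2 - a1) / 2, a1 |-> a1, an
   injective ring endomorphism of Q[a1,a2]. With al = a2 and be = a1 - a2 the
   images of a1 and a2 are al + be and - al be / 2, and all coefficients become
   values of the Abel-type polynomials
     C_0 = 1,  C_n(x) = x/n! * prod_(1 <= j < n) (x - n al + j (al - be)),
     Q_n(x) = C_n(x) / x:
   theta(a_k) = C_k(al) for k <> 1, and theta(m_n) = Q_(n+1)(0). So
   theta(m_(n-1)) = Q_n(0), a product which, after pairing the factors j and
   n - j, is theta of the claimed right-hand side. *)

Definition shift (R : nzRingType) (c : R) : {poly R} := 'X + c%:P.

Definition finite_diff (R : comNzRingType) (d : R) (p : {poly R}) : {poly R} :=
  p - (p \Po shift (- d)).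

Section Shifts.
Variable R : comNzRingType.
Implicit Types (p : {poly R}) (a b c d x : R).

Lemma horner_shift p c x : (p \Po shift c).[x] = p.[x + c].
Proof. by rewrite horner_comp /shift hornerD hornerX hornerC. Qed.

Lemma comp_shiftD p a b : (p \Po shift a) \Po shift b = p \Po shift (a + b).
Proof.
by rewrite -comp_polyA /shift comp_polyD comp_polyX comp_polyC polyCD addrA
  (addrAC _ b%:P).
Qed.

Lemma XsubC_shift a c : ('X - c%:P) \Po shift a = 'X - (c - a)%:P.
Proof. by rewrite /shift comp_polyB comp_polyX comp_polyC polyCB; ring. Qed.

Lemma finite_diff_sum d (I : Type) (s : seq I) (F : I -> {poly R}) :
  finite_diff d (\sum_(i <- s) F i) = \sum_(i <- s) finite_diff d (F i).
Proof. by rewrite /finite_diff rmorph_sum sumrB. Qed.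

Lemma finite_diff_Cmul d c p : finite_diff d (c%:P * p) = c%:P * finite_diff d p.
Proof. by rewrite /finite_diff comp_polyM comp_polyC mulrBr. Qed.

Lemma finite_diff_polyC d c : finite_diff d c%:P = 0.
Proof. by rewrite /finite_diff comp_polyC subrr. Qed.

Lemma finite_diff_shift d c p :
  finite_diff d (p \Po shift c) = finite_diff d p \Po shift c.
Proof. by rewrite /finite_diff comp_polyB !comp_shiftD (addrC (- d)). Qed.

End Shifts.

Section Convolutions.
Variable R : comNzRingType.

Lemma sum_indicator N k (G : nat -> R) : (k < N)%N ->
  \sum_(p < N) (p == k :> nat)%:R * G p = G k.
Proof.
move=> lt_kN; rewrite (bigD1 (Ordinal lt_kN)) //= eqxx mul1r big1 ?addr0 // => j.
by rewrite -val_eqE /= => /negbTE ->; rewrite mul0r.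
Qed.

Lemma convolution_rev (F : nat -> nat -> R) N :
  \sum_(k < N.+1) F k (N - k)%N = \sum_(k < N.+1) F (N - k)%N k.
Proof.
rewrite (reindex_inj rev_ord_inj); apply: eq_bigr => k _ /=.
by rewrite subSS subKn // -ltnS.
Qed.

Lemma convolution_weighted (a : nat -> R) N :
  (\sum_(n < N.+1) n%:R * (a n * a (N - n)%N)) *+ 2 =
  N%:R * \sum_(n < N.+1) a n * a (N - n)%N.
Proof.
rewrite mulr2n {2}(convolution_rev (fun n m => n%:R * (a n * a m))) -big_split.
rewrite mulr_sumr; apply: eq_bigr => k _ /=.
by rewrite natrB -1?ltnS //; ring.
Qed.

Lemma prod_pairing (F : nat -> R) n : (0 < n)%N ->
  \prod_(1 <= j < n) F j =
  (\prod_(1 <= j < n | (2 * j < n)%N) (F j * F (n - j)%N)) *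
  (if odd n then 1 else F n./2).
Proof.
move=> n_gt0.
rewrite (bigID (fun j => (2 * j < n)%N)) /= big_split /= -mulrA; congr (_ * _).
rewrite (bigID (fun j => (2 * j == n)%N)) /= mulrC; congr (_ * _).
  rewrite big_nat_rev /= big_nat_cond [RHS]big_nat_cond.
  apply: eq_big => [j|j]; first by apply/idP/idP; lia.
  by move=> /andP [/andP [le1j ltjn] _]; congr F; lia.
have := odd_double_half n; case: (odd n) => /= def_n.
  by rewrite big1 // => j /andP [_ /eqP eq_n]; exfalso; lia.
set k := n./2 in def_n *.
rewrite (@big_cat_nat _ _ _ k) /=; [|lia|lia].
rewrite big_nat_cond big1 ?mul1r => [|j /andP [/andP [_ ltjk] /andP [_ /eqP]]]; last by lia.
rewrite big_ltn_cond; last by lia.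
rewrite (_ : ~~ (2 * k < n)%N && (2 * k == n)%N); last by apply/andP; split; lia.
by rewrite big_nat_cond big1 ?mulr1 // => j /andP [/andP [ltkj _] /andP [_ /eqP]]; lia.
Qed.

End Convolutions.

(* A polynomial over a domain of characteristic zero is determined by its
   finite differences and its value at 0: a nonzero polynomial invariant under
   a nonzero shift would have infinitely many roots. *)
Section DifferenceDetermines.
Variable R : idomainType.
Hypothesis natr_neq0 : forall n : nat, (n.+1%:R : R) != 0.
Implicit Types (p q : {poly R}) (d : R).

Lemma natr_inj : injective (fun n : nat => n%:R : R).
Proof.
have ne m n : (m < n)%N -> (m%:R : R) != n%:R.
  move=> lt_mn; rewrite eq_sym -subr_eq0 -natrB ?(ltnW lt_mn) //.
  by rewrite -(subnSK lt_mn) natr_neq0.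
by move=> k l /= e; case: (ltngtP k l) => [/ne|/ne|//]; rewrite e eqxx.
Qed.

Lemma shift_invariant_const d p : d != 0 ->
  p \Po shift d = p -> p = (p.[0])%:P.
Proof.
move=> dn0 hp; apply/eqP; rewrite -subr_eq0; apply/eqP.
set q := p - _.
have qd : q \Po shift d = q by rewrite /q comp_polyB hp comp_polyC.
have root_q k : root q (k%:R * d).
  apply/rootP; elim: k => [|k IHk]; first by rewrite mul0r !hornerE subrr.
  by rewrite mulrSr mulrDl mul1r -horner_shift qd.
apply/eqP; apply: contraT => qn0.
have := max_poly_roots qn0 (rs := [seq k%:R * d | k <- iota 0 (size q)]).
rewrite size_map size_iota ltnn; apply.
  by apply/allP => x /mapP [k _ ->].
rewrite map_inj_uniq ?iota_uniq // => k l /eqP.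
rewrite -subr_eq0 -mulrBl mulf_eq0 (negbTE dn0) orbF subr_eq0 => /eqP.
exact: natr_inj.
Qed.

Lemma eq_of_finite_diff d p q : d != 0 ->
  finite_diff d p = finite_diff d q -> p.[0] = q.[0] -> p = q.
Proof.
move=> dn0 hdiff h0; apply/eqP; rewrite -subr_eq0; apply/eqP.
have inv : (p - q) \Po shift (- d) = p - q.
  apply/eqP; rewrite eq_sym -subr_eq0; apply/eqP.
  move: hdiff; rewrite /finite_diff comp_polyB => /eqP.
  by rewrite -subr_eq0 => /eqP <-; ring.
rewrite (shift_invariant_const _ inv) ?oppr_eq0 //.
by rewrite hornerD hornerN h0 subrr.
Qed.

End DifferenceDetermines.

Section AbelPolynomials.
Variable R : idomainType.
Hypothesis natr_unit : forall n : nat, (n.+1%:R : R) \is a GRing.unit.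
Variables al be : R.
Hypothesis al_neq_be : al != be.
Local Notation de := (al - be).

Lemma natr_succ_neq0 n : (n.+1%:R : R) != 0.
Proof. by apply: contraTneq (natr_unit n) => ->; rewrite unitr0. Qed.

Lemma de_neq0 : de != 0.
Proof. by rewrite subr_eq0. Qed.

Definition fact_inv (n : nat) : R := (n`!%:R)^-1.

Lemma fact_unit n : (n`!%:R : R) \is a GRing.unit.
Proof. by rewrite -(prednK (fact_gt0 n)) natr_unit. Qed.

Lemma fact_invS n : n.+1%:R * fact_inv n.+1 = fact_inv n.
Proof.
by rewrite /fact_inv factS natrM invrM ?natr_unit ?fact_unit // mulrCA divrr ?mulr1.
Qed.

Lemma fact_inv1 : fact_inv 1 = 1.
Proof. by rewrite /fact_inv invr1. Qed.

Lemma fact_inv_mul_fact n : (0 < n)%N -> fact_inv n * n.-1`!%:R = (n%:R)^-1.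
Proof.
case: n => // n _.
rewrite /fact_inv factS natrM invrM ?natr_unit ?fact_unit //.
by rewrite mulrAC mulVr ?fact_unit // mul1r.
Qed.

Definition abel_prod (n : nat) : {poly R} :=
  \prod_(j < n.-1) ('X - (n%:R * al - j.+1%:R * de)%:P).
Definition abelQ (n : nat) : {poly R} := (fact_inv n)%:P * abel_prod n.
Definition abelC (n : nat) : {poly R} := if n is _.+1 then 'X * abelQ n else 1.

Lemma abelC0 : abelC 0 = 1. Proof. by []. Qed.

Lemma abelC_at0 k : (abelC k).[0] = (k == 0)%:R.
Proof. by case: k => [|k]; rewrite /abelC ?hornerC // hornerM hornerX mul0r. Qed.

Lemma abelQ1 : abelQ 1 = 1.
Proof. by rewrite /abelQ /abel_prod big_ord0 fact_inv1 polyC1 mulr1. Qed.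

Lemma abelC1 : abelC 1 = 'X.
Proof. by rewrite /abelC abelQ1 mulr1. Qed.

Lemma abelC2_at_al : (abelC 2).[al] = - (fact_inv 2 * al * be).
Proof.
rewrite /abelC /abelQ /abel_prod big_ord1 !hornerM hornerX hornerC hornerXsubC.
rewrite /=; ring.
Qed.

Lemma abel_prod_succ M : abel_prod M.+2 =
  (abel_prod M.+1 \Po shift (- al)) * ('X - (M.+2%:R * al - M.+1%:R * de)%:P).
Proof.
rewrite /abel_prod /= big_ord_recr /= rmorph_prod /=; congr (_ * _).
by apply: eq_bigr => j _; rewrite XsubC_shift; congr ('X - _%:P); ring.
Qed.

Lemma abel_prod_shift M : abel_prod M.+2 \Po shift (- de) =
  ('X - (M.+2%:R * al)%:P) * (abel_prod M.+1 \Po shift (- al)).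
Proof.
rewrite /abel_prod /= !rmorph_prod /= big_ord_recl /= XsubC_shift; congr (_ * _).
  by congr ('X - _%:P); ring.
by apply: eq_bigr => j _; rewrite !XsubC_shift; congr ('X - _%:P); rewrite /bump /=; ring.
Qed.

Lemma abelC_diff N :
  finite_diff de (abelC N.+1) = de%:P * (abelC N \Po shift (- al)).
Proof.
case: N => [|M].
  rewrite /finite_diff /abelC /abelQ /abel_prod /= big_ord0 fact_inv1 polyC1 !mulr1.
  by rewrite /shift comp_polyX comp_polyC; ring.
rewrite /finite_diff /abelC /abelQ !comp_polyM !comp_polyC !comp_polyX.
rewrite abel_prod_shift abel_prod_succ -(fact_invS M.+1).
set P := abel_prod M.+1 \Po _.
by rewrite /shift !(rmorphB, rmorphM, rmorphN, rmorph_nat) /=; ring.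
Qed.

Lemma abelQ_diff N : N.+1%:R%:P * finite_diff de (abelQ N.+1) =
  (N%:R * de)%:P * (abelQ N \Po shift (- al)).
Proof.
case: N => [|M].
  rewrite /finite_diff /abelQ /abel_prod /= big_ord0 mulr1 comp_polyC subrr.
  by rewrite mulr0 mul0r polyC0 mul0r.
rewrite /finite_diff /abelQ !comp_polyM !comp_polyC abel_prod_shift abel_prod_succ.
rewrite -(fact_invS M.+1).
set P := abel_prod M.+1 \Po _.
by rewrite !(rmorphB, rmorphM, rmorph_nat) /=; ring.
Qed.

Lemma abelC_binomial mu N :
  \sum_(k < N.+1) ((abelC (N - k)).[mu])%:P * abelC k = abelC N \Po shift mu.
Proof.
elim: N => [|N IHN].
  by rewrite big_ord1 abelC0 hornerC mulr1 comp_polyC.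
apply: (eq_of_finite_diff natr_succ_neq0 de_neq0).
  rewrite finite_diff_sum big_ord_recl abelC0 finite_diff_Cmul finite_diff_polyC.
  rewrite mulr0 add0r finite_diff_shift abelC_diff comp_polyM comp_polyC.
  rewrite comp_shiftD (addrC (- al)) -comp_shiftD -IHN rmorph_sum mulr_sumr.
  apply: eq_bigr => i _ /=.
  by rewrite finite_diff_Cmul abelC_diff subSS comp_polyM comp_polyC mulrCA.
rewrite horner_sum big_ord_recl big1 => [|i _]; last by rewrite hornerM abelC_at0 mulr0.
by rewrite hornerM hornerC abelC_at0 horner_shift add0r mulr1 addr0 subn0.
Qed.

Definition abel_h (k : nat) : R := k.+1%:R * (abelQ k.+1).[0].

Lemma abelQ_sheffer N :
  \sum_(k < N.+1) (abel_h k)%:P * abelC (N - k) = N.+1%:R%:P * abelQ N.+1.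
Proof.
elim: N => [|N IHN].
  by rewrite big_ord1 subn0 abelC0 mulr1 /abel_h abelQ1 hornerC mulr1 mul1r.
apply: (eq_of_finite_diff natr_succ_neq0 de_neq0).
  rewrite finite_diff_sum big_ord_recr /= subnn abelC0 finite_diff_Cmul finite_diff_polyC.
  rewrite mulr0 addr0 finite_diff_Cmul abelQ_diff.
  have -> : (N.+1%:R * de)%:P * (abelQ N.+1 \Po shift (- al)) =
      de%:P * ((N.+1%:R%:P * abelQ N.+1) \Po shift (- al)).
    by rewrite [in RHS]comp_polyM comp_polyC polyCM; ring.
  rewrite -IHN rmorph_sum mulr_sumr; apply: eq_bigr => i _ /=.
  rewrite finite_diff_Cmul subSn -1?ltnS // abelC_diff.
  by rewrite comp_polyM comp_polyC mulrCA.
rewrite horner_sum big_ord_recr /= big1 => [|i _]; last first.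
  by rewrite hornerM abelC_at0 subSn -1?ltnS // mulr0.
by rewrite subnn add0r hornerM abelC_at0 hornerC mulr1 hornerM hornerC /abel_h.
Qed.

Lemma abelQ_at0 n :
  (abelQ n).[0] = fact_inv n * \prod_(1 <= j < n) (j%:R * de - n%:R * al).
Proof.
rewrite /abelQ /abel_prod hornerM hornerC horner_prod big_add1 big_mkord.
by congr (_ * _); apply: eq_bigr => j _; rewrite hornerXsubC; ring.
Qed.

Lemma abelC_at_double M : M.+2%:R * (abelC M.+2).[al + al] =
  (al + al - M.+1%:R * (be + be)) * (abelC M.+1).[al].
Proof.
rewrite /abelC /abelQ abel_prod_succ !hornerM !hornerX !hornerC horner_shift.
rewrite hornerXsubC addrK -(fact_invS M.+1); ring.
Qed.

Lemma abelQ_at_al M :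
  M.+2%:R * (abelQ M.+2).[al] = - (M.+1%:R * be) * (abelQ M.+1).[0].
Proof.
rewrite /abelQ abel_prod_succ !hornerM !hornerC horner_shift !hornerXsubC.
rewrite subrr -(fact_invS M.+1); ring.
Qed.

(* Consequence of the binomial identity at x = mu = al, used for the
   associativity recursion: sum_n n C_n(al) C_(i+2-n)(al). *)
Lemma abelC_weighted_conv i :
  \sum_(n < i.+3) n%:R * ((abelC n).[al] * (abelC (i.+2 - n)).[al]) =
  (al - i.+1%:R * be) * (abelC i.+1).[al].
Proof.
have conv := convolution_weighted (fun n => (abelC n).[al]) i.+2.
have binom : \sum_(n < i.+3) (abelC n).[al] * (abelC (i.+2 - n)).[al] =
    (abelC i.+2).[al + al].
  rewrite -horner_shift -abelC_binomial horner_sum.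
  by apply: eq_bigr => k _; rewrite hornerM hornerC mulrC.
rewrite /= binom abelC_at_double in conv.
apply: (mulIf (natr_succ_neq0 1)); rewrite mulr_natr conv; ring.
Qed.

End AbelPolynomials.

Arguments abelC : simpl never.

Lemma natQA (n : nat) : (n%:R : QA) = ((n%:R : rat)%:P)%:P.
Proof. by rewrite !rmorph_nat. Qed.

Lemma natQA_unit (n : nat) : (n.+1%:R : QA) \is a GRing.unit.
Proof. by rewrite natQA !rmorph_unit // unitfE pnatr_eq0. Qed.

Lemma natQA_neq0 (n : nat) : (n.+1%:R : QA) != 0.
Proof. exact: natr_succ_neq0 natQA_unit n. Qed.

Section PowerCoefficients.
Variable F : nat -> nat -> QA.
Hypothesis F_y0 : forall p, F p 0%N = (p == 1%N)%:R.

Lemma pow2_coef_y0 n i : pow2 F n i 0 = (i == n)%:R.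
Proof.
elim: n i => [|n IHn] i; first by rewrite /= /one2 andbT.
rewrite /= /mul2; under eq_bigr => p _ do rewrite big_ord1 /= F_y0 IHn.
case: i => [|i]; first by rewrite big_ord1 /= mul0r.
by rewrite (@sum_indicator _ _ 1 (fun p => ((i.+1 - p)%N == n)%:R)) // subSS subn0 eqSS.
Qed.

Lemma pow2_coef_y1 n i :
  pow2 F n i 1 = if (n <= i.+1)%N then n%:R * F (i.+1 - n)%N 1%N else 0.
Proof.
elim: n i => [|n IHn] i; first by rewrite /= /one2 andbF mul0r.
rewrite /= /mul2.
under eq_bigr => p _ do rewrite big_ord_recl big_ord1 /= F_y0 IHn pow2_coef_y0.
rewrite big_split /=; case: i => [|i].
  rewrite !big_ord1 /= mul0r add0r.
  by case: n {IHn} => [|n] /=; rewrite ?mul1r ?mulr1 ?mulr0.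
rewrite (@sum_indicator _ _ 1 (fun p => if (n <= (i.+1 - p).+1)%N
  then n%:R * F ((i.+1 - p).+1 - n)%N 1%N else 0)) // subSS subn0.
case: (leqP n i.+1) => hn; last first.
  rewrite big1 => [|p _]; first by rewrite ltnS leqNgt hn addr0.
  by rewrite (_ : ((i.+1 - p)%N == n) = false) ?mulr0 //; apply/negbTE/eqP; lia.
rewrite (eq_bigr (fun p : 'I_i.+2 => (p == (i.+1 - n)%N :> nat)%:R * F p 1%N)).
  rewrite (@sum_indicator _ _ _ (fun p => F p 1%N)) ?ltnS ?leq_subr //.
  by rewrite hn subSS mulrSr mulrDl mul1r.
move=> [p lt_p] _ /=; rewrite mulrC; congr (_%:R * _); apply/eqP/eqP; lia.
Qed.

End PowerCoefficients.

(* The recursion for the coefficients of R(x) obtained by comparing the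
   coefficients of x^i y z in the associativity equation. *)
Definition abel_rec (f : nat -> QA) (i : nat) : Prop :=
  \sum_(n < i.+2) f n * (n%:R * (((i.+1 - n)%N == 1%N)%:R * f 1%N + f (i.+1 - n)%N))
  = f i * f 1%N.

Lemma abel_rec_of_assoc r : is_universal_abel r -> forall i, (2 <= i)%N -> abel_rec r i.
Proof.
case=> r0 r1 r2 assoc i le2i.
have F_y0 p : abelF r p 0%N = (p == 1%N)%:R by rewrite /abelF r0 mulr1 /= mul0r addr0.
have := assoc i 1%N 1%N.
rewrite /abelF /= (_ : (i == 1%N) = false); last by apply/negbTE; lia.
rewrite !mul0r !add0r !mul1r => coef_i11.
have compR_i1 : compR r (abelF r) i 1 = r i * r 1%N.
  by apply: (addrI (r i * r 1%N)); rewrite coef_i11 mulrDr.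
rewrite /abel_rec -compR_i1 /compR addn1; apply: eq_bigr => n _.
by rewrite (pow2_coef_y1 F_y0) -ltnS ltn_ord /abelF /= mul1r.
Qed.

Lemma abel_rec_unique (f g : nat -> QA) : f 0%N = 1 -> g 0%N = 1 ->
  f 1%N = g 1%N -> f 2%N = g 2%N -> (forall i, (2 <= i)%N -> abel_rec f i) ->
  (forall i, (2 <= i)%N -> abel_rec g i) -> forall n, f n = g n.
Proof.
move=> f0 g0 f1 f2 rec_f rec_g n; elim/ltn_ind: n => n IH.
case: n IH => [|[|[|i]]] IH; rewrite ?f0 ?g0 //.
have := rec_f i.+2 isT; have := rec_g i.+2 isT; rewrite /abel_rec.
rewrite big_ord_recr big_ord_recl /= subnn /= !mulr0n !mul0r !add0r g0 mulr1 => eq_g.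
rewrite big_ord_recr big_ord_recl /= subnn /= !mulr0n !mul0r !add0r f0 mulr1 => eq_f.
have same_terms (k : 'I_i.+2) :
    f (bump 0 k) * ((bump 0 k)%:R * (((i.+3 - bump 0 k)%N == 1%N)%:R * f 1%N
      + f (i.+3 - bump 0 k)%N))
  = g (bump 0 k) * ((bump 0 k)%:R * (((i.+3 - bump 0 k)%N == 1%N)%:R * g 1%N
      + g (i.+3 - bump 0 k)%N)).
  by have := ltn_ord k; rewrite /bump /= => lt_k; rewrite f1 !IH //; lia.
rewrite (eq_bigr _ (fun k _ => same_terms k)) f1 (IH i.+2) // -eq_g in eq_f.
by move/addrI: eq_f; apply: mulIf; exact: natQA_neq0.
Qed.

Lemma abel_rec_rmorph (phi : {rmorphism QA -> QA}) f i :
  abel_rec f i -> abel_rec (phi \o f) i.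
Proof.
rewrite /abel_rec /= => rec_i; rewrite -rmorphM -rec_i rmorph_sum.
by apply: eq_bigr => n _; rewrite /= !(rmorphM, rmorphD, rmorph_nat).
Qed.

(* The n-th coefficient of log'(x) (1 + a1 x + a2 x^2 + ...) = 1, n > 0. *)
Definition log_eq (d f : nat -> QA) (n : nat) : Prop :=
  \sum_(k < n.+1) d k * ((n - k).+1)%:R * f (n - k)%N = 0.

Lemma log_unique (d f g : nat -> QA) : d 0%N = 1 -> f 0%N = g 0%N ->
  (forall n, (0 < n)%N -> log_eq d f n) -> (forall n, (0 < n)%N -> log_eq d g n) ->
  forall n, f n = g n.
Proof.
move=> d0 fg0 eq_f eq_g n; elim/ltn_ind: n => [[|n]] IH //.
have := eq_f n.+1 isT; have := eq_g n.+1 isT; rewrite /log_eq.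
rewrite big_ord_recl /= => hg; rewrite big_ord_recl /= => hf.
have same_terms (k : 'I_n.+1) :
    d (bump 0 k) * ((n.+1 - bump 0 k).+1)%:R * f (n.+1 - bump 0 k)%N
  = d (bump 0 k) * ((n.+1 - bump 0 k).+1)%:R * g (n.+1 - bump 0 k)%N.
  by have := ltn_ord k; rewrite /bump /= => lt_k; rewrite IH //; lia.
rewrite (eq_bigr _ (fun k _ => same_terms k)) in hf.
move: (etrans hf (esym hg)) => /addIr.
by rewrite subn0 d0 !mul1r; apply: mulfI; exact: natQA_neq0.
Qed.

Lemma log_eq_rmorph (phi : {rmorphism QA -> QA}) d f n :
  log_eq d f n -> log_eq (phi \o d) (phi \o f) n.
Proof.
rewrite /log_eq => /(congr1 phi); rewrite rmorph_sum rmorph0 => eq_n.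
apply: etrans eq_n; by apply: eq_bigr => k _; rewrite /= !(rmorphM, rmorph_nat).
Qed.

Lemma a2_neq_a1_sub_a2 : a2 != a1 - a2.
Proof.
apply/eqP => /(congr1 (fun p : QA => p`_1)).
rewrite coefB /a1 /a2 coefX coefC /= sub0r => /eqP.
by rewrite -addr_eq0 -(natrD _ 1 1) -(rmorph_nat (polyC)) polyC_eq0 pnatr_eq0.
Qed.

Lemma cst_natV n : cst (n%:R)^-1 = (n%:R : QA)^-1.
Proof.
case: n => [|n]; first by rewrite !invr0 /cst !polyC0.
by rewrite /cst !rmorphV ?rmorph_unit ?unitfE ?pnatr_eq0 // !rmorph_nat.
Qed.

Lemma cstM (a b : rat) : cst (a * b) = cst a * cst b.
Proof. by rewrite /cst !rmorphM. Qed.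

Lemma cst_nat (n : nat) : cst n%:R = n%:R.
Proof. by rewrite /cst !rmorph_nat. Qed.

Lemma cst_half : cst (1/2) + cst (1/2) = 1.
Proof. by rewrite /cst -!polyCD -mulrDl -(natrD _ 1 1) divff ?pnatr_eq0. Qed.

Local Notation C := (abelC a2 (a1 - a2)).
Local Notation Q := (abelQ a2 (a1 - a2)).

(* The explicit solution, built from the Abel polynomials with al = a2 and
   be = a1 - a2 evaluated at a2 (Q at 0): candidates for theta(a_k), for theta of
   the denominator coefficients 1, a1, a2, a3, ..., and for theta(m_n). Only the
   degree-one terms need a correction, since C_1(a2) = a2. *)
Definition r1_defect : QA := cst (1/2) * a1 - a2.
Definition r_hat (k : nat) : QA := (C k).[a2] + (k == 1%N)%:R * r1_defect.
Definition den_hat (k : nat) : QA := (C k).[a2] + (k == 1%N)%:R * (a1 - a2).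
Definition m_hat (n : nat) : QA := (Q n.+1).[0].

Lemma r_hat1 : r_hat 1 = a2 + r1_defect.
Proof. by rewrite /r_hat abelC1 hornerX mul1r. Qed.

(* r_hat satisfies the associativity recursion: the bulk of the sum is the
   weighted convolution of the C_k(a2); the terms n = 1 and n = i absorb the
   correction. *)
Lemma r_hat_rec i : (2 <= i)%N -> abel_rec r_hat i.
Proof.
case: i => [|i] // le2i; rewrite /abel_rec.
have r1_add_defect : r_hat 1 + r1_defect = a1 - a2.
  rewrite r_hat1 /r1_defect.
  transitivity ((cst (1/2) + cst (1/2)) * a1 - a2); first by ring.
  by rewrite cst_half mul1r.
have term (n : 'I_i.+3) :
    r_hat n * (n%:R * (((i.+2 - n)%N == 1%N)%:R * r_hat 1 + r_hat (i.+2 - n)%N))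
  = n%:R * ((C n).[a2] * (C (i.+2 - n)).[a2])
    + (n == 1%N :> nat)%:R * (r1_defect * n%:R * (C (i.+2 - n)).[a2])
    + (n == i.+1 :> nat)%:R * (n%:R * (C n).[a2] * (r_hat 1 + r1_defect)).
  have := ltn_ord n; move: (nat_of_ord n) => k lt_k.
  rewrite /r_hat (_ : ((i.+2 - k)%N == 1%N) = (k == i.+1)); last by apply/eqP/eqP; lia.
  have [->|k1] := eqVneq k 1%N.
    by rewrite (_ : (1 == i.+1)%N = false) /=; [ring | apply/negbTE; lia].
  by have [->|ki] := eqVneq k i.+1; rewrite /=; ring.
rewrite (eq_bigr _ (fun n _ => term n)) !big_split /=.
rewrite (abelC_weighted_conv natQA_unit a2_neq_a1_sub_a2).
rewrite (@sum_indicator _ _ 1 (fun n => r1_defect * n%:R * (C (i.+2 - n)).[a2])) //.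
rewrite (@sum_indicator _ _ i.+1
  (fun n => n%:R * (C n).[a2] * (r_hat 1 + r1_defect))) // r1_add_defect.
by rewrite r_hat1 /r_hat (_ : (i.+1 == 1%N) = false) /=; [ring | lia].
Qed.

(* m_hat solves the logarithm equation for den_hat: by the Sheffer identity at
   a2 the sum is (n+2) Q_(n+2)(a2) + (n+1) (a1 - a2) Q_(n+1)(0), which vanishes. *)
Lemma m_hat_log n : (0 < n)%N -> log_eq den_hat m_hat n.
Proof.
case: n => [|n] // _; rewrite /log_eq.
pose h := abel_h a2 (a1 - a2).
have term (k : 'I_n.+2) :
    den_hat k * ((n.+1 - k).+1)%:R * m_hat (n.+1 - k)%N
  = h (n.+1 - k)%N * (C k).[a2]
    + (k == 1%N :> nat)%:R * ((a1 - a2) * ((n.+1 - k).+1)%:R * m_hat (n.+1 - k)%N).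
  by rewrite /den_hat /h /abel_h /m_hat; ring.
have sheffer : \sum_(k < n.+2) h k * (C (n.+1 - k)).[a2] = n.+2%:R * (Q n.+2).[a2].
  have := congr1 (horner^~ a2) (abelQ_sheffer natQA_unit a2_neq_a1_sub_a2 n.+1).
  rewrite /= horner_sum hornerM hornerC => <-.
  by apply: eq_bigr => k _; rewrite hornerM hornerC.
rewrite (eq_bigr _ (fun k _ => term k)) big_split /=.
rewrite (convolution_rev (fun a b => h b * (C a).[a2])) sheffer (abelQ_at_al natQA_unit).
rewrite (@sum_indicator _ _ 1
  (fun k => (a1 - a2) * ((n.+1 - k).+1)%:R * m_hat (n.+1 - k)%N)) //.
by rewrite subSS subn0 /m_hat; ring.
Qed.

Definition theta_a2 : QA := cst (1/2) * (a2 * (a2 - a1)).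

Lemma theta_a2E : theta_a2 = (C 2).[a2].
Proof.
rewrite abelC2_at_al /fact_inv -cst_natV /theta_a2 div1r; ring.
Qed.

Lemma theta_injective (p q : QA) : p \Po theta_a2 = q \Po theta_a2 -> p = q.
Proof.
have size_theta : (1 < size theta_a2)%N.
  rewrite /theta_a2 /cst /a2 /a1 size_Cmul ?polyC_eq0 //.
  by rewrite size_mul ?polyX_eq0 ?size_polyX ?size_XsubC // -size_poly_eq0 size_XsubC.
move=> eq_pq; apply/eqP; rewrite -subr_eq0 -(comp_poly_eq0 _ size_theta).
by rewrite comp_polyB eq_pq subrr.
Qed.

Lemma theta_cst (c : rat) : cst c \Po theta_a2 = cst c.
Proof. exact: comp_polyC. Qed.

Lemma theta_a1 : a1 \Po theta_a2 = a1.
Proof. exact: comp_polyC. Qed.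

(* By uniqueness of the solutions of the two recursions, theta sends the
   coefficients of R, of the denominator and of the logarithm to the explicit
   sequences. *)
Lemma theta_r r : is_universal_abel r -> forall n, r n \Po theta_a2 = r_hat n.
Proof.
move=> univ; have [r0 r1 r2 _] := univ.
apply: (abel_rec_unique (f := fun n => r n \Po theta_a2)).
- by rewrite r0 comp_polyC.
- by rewrite /r_hat abelC0 hornerC mul0r addr0.
- by rewrite r1 r_hat1 comp_polyM theta_cst theta_a1 /r1_defect; ring.
- by rewrite r2 /a2 comp_polyX theta_a2E /r_hat mul0r addr0.
- by move=> i le2i; apply: abel_rec_rmorph; exact: abel_rec_of_assoc.
- exact: r_hat_rec.
Qed.

Lemma theta_den r : is_universal_abel r ->
  forall k, abel_den r k \Po theta_a2 = den_hat k.
Proof.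
move=> univ [|[|k]] /=.
- by rewrite comp_polyC /den_hat abelC0 hornerC mul0r addr0.
- by rewrite theta_a1 /den_hat abelC1 hornerX mul1r; ring.
- by rewrite theta_r // /r_hat /den_hat !mul0r.
Qed.

Lemma theta_m r m : is_universal_abel r -> is_abel_log r m ->
  forall n, m n \Po theta_a2 = m_hat n.
Proof.
move=> univ [m0 log_m].
apply: (log_unique (d := den_hat)).
- by rewrite /den_hat abelC0 hornerC mul0r addr0.
- by rewrite m0 comp_polyC /m_hat abelQ1 hornerC.
- move=> n n_gt0; have := log_eq_rmorph (comp_poly theta_a2) (log_m n n_gt0).
  by rewrite /log_eq; under eq_bigr => k _ do rewrite /= theta_den //.
- exact: m_hat_log.
Qed.

Definition paired_factor (n j : nat) : QA :=
  a1 ^+ 2 - cst ((2 * (n - 2 * j) ^ 2)%:R / (j * (n - j))%:R) * a2.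

Lemma abel_rhsE n : abel_rhs n = cst (n%:R)^-1 * (if odd n then 1 else - a1) *
  \prod_(1 <= j < n | (2 * j < n)%N) paired_factor n j.
Proof. by []. Qed.

Lemma paired_factorE n j : (1 <= j)%N -> (2 * j < n)%N ->
  (j%:R * (a2 - (a1 - a2)) - n%:R * a2) * ((n - j)%:R * (a2 - (a1 - a2)) - n%:R * a2)
  = (j * (n - j))%:R * (paired_factor n j \Po theta_a2).
Proof.
move=> le1j lt2jn.
have two_theta : 2%:R * theta_a2 = a2 * (a2 - a1).
  by rewrite /theta_a2 mulrA mulr_natl mulr2n cst_half mul1r.
have c_cancel : ((j * (n - j))%:R : rat) * ((2 * (n - 2 * j) ^ 2)%:R / (j * (n - j))%:R)
    = (2 * (n - 2 * j) ^ 2)%:R.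
  by rewrite mulrC divfK // pnatr_eq0 muln_eq0 negb_or; apply/andP; split; apply/eqP; lia.
have := congr1 cst c_cancel; rewrite cstM !cst_nat => cst_c.
have c_theta : ((2 * (n - 2 * j) ^ 2)%:R : QA) * theta_a2
    = (n%:R - 2%:R * j%:R) ^+ 2 * (a2 * (a2 - a1)).
  by rewrite natrM natrX natrB ?natrM -?two_theta; [ring | lia].
rewrite /paired_factor comp_polyB !comp_polyM theta_cst !theta_a1 /a2 comp_polyX -/a2.
rewrite [RHS]mulrBr [_ * (_ * theta_a2)]mulrA cst_c c_theta natrM natrB; last by lia.
ring.
Qed.

(* The image of the right-hand side under the substitution is Q_n(0): pair
   the factors j and n - j of Q_n(0) = (1/n!) prod_(1<=j<n) (j (2 a2 - a1) - n a2). *)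
Lemma theta_rhs n : (2 <= n)%N -> abel_rhs n \Po theta_a2 = (Q n).[0].
Proof.
move=> le2n; have n_gt0 : (0 < n)%N by lia.
pose H j := j%:R * (a2 - (a1 - a2)) - n%:R * a2.
have paired : \prod_(1 <= j < n | (2 * j < n)%N) (H j * H (n - j)%N) =
    (\prod_(1 <= j < n | (2 * j < n)%N) (j * (n - j))%:R) *
    \prod_(1 <= j < n | (2 * j < n)%N) (paired_factor n j \Po theta_a2).
  rewrite -big_split /= big_nat_cond [RHS]big_nat_cond.
  by apply: eq_bigr => j /andP [/andP [le1j _] lt2jn]; exact: paired_factorE.
have fact_paired : (n.-1`!%:R : QA) =
    (\prod_(1 <= j < n | (2 * j < n)%N) (j * (n - j))%:R) *
    (if odd n then 1 else (n./2)%:R).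
  rewrite fact_prod natr_prod prednK // (prod_pairing _ n_gt0).
  by congr (_ * _); apply: eq_bigr => j _; rewrite natrM.
have middle : ~~ odd n -> H n./2 = (n./2)%:R * - a1.
  by move=> even_n; rewrite /H -{2}(even_halfK even_n) -addnn natrD; ring.
rewrite abelQ_at0 (prod_pairing H n_gt0) paired abel_rhsE !rmorphM rmorph_prod /=.
rewrite theta_cst cst_natV -(fact_inv_mul_fact natQA_unit n_gt0) fact_paired.
case: (boolP (odd n)) => [_|even_n]; first by rewrite comp_polyC; ring.
by rewrite (middle even_n) /a1 -polyCN comp_polyC polyCN; ring.
Qed.

Theorem proposition4p1 (r m : nat -> QA) :
  is_universal_abel r -> is_abel_log r m ->
  forall n : nat, (2 <= n)%N -> m n.-1 = abel_rhs n.
Proof.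
move=> univ log_m n le2n; apply: theta_injective.
by rewrite (theta_m univ log_m) theta_rhs // /m_hat prednK //; lia.
Qed.
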